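(* Let $(X,d_X,m_X)$ and $(Y,d_Y,m_Y)$ be metric measure spaces and $p:X\to Y$ a 1-Lipschitz map with $p_*m_X=m_Y$, and let $\{\mu_y\}_{y\in Y}$ be the disintegration of $m_X$ for $p$. Assume there exists a Borel set $\Omega\subset Y$ with $m_Y(Y\setminus\Omega)=0$ such that $W_2(\mu_y,\mu_{y'})=d_Y(y,y')$ for all $y,y'\in\Omega$. Then $p$ is a submetry. In particular, $\{p^{-1}(y)\}_{y\in Y}$ is a metric measure foliation of $X$ and $Y$ is mm-isomorphic to the quotient space $X^*$.
   Context: A metric measure space $(X,d,m)$: complete separable metric space with Borel measure satisfying $0<m(B_r(x))<\infty$ for all $x$, $r>0$. The disintegration of $m_X$ for $p$ is the ($m_Y$-a.e. unique) family of Borel probability measures with $y\mapsto\mu_y(A)$ Borel, $\mu_y(X\setminus p^{-1}(y))=0$ for $m_Y$-a.e. $y$, and $\int f\,dm_X=\int\int f\,d\mu_y\,dm_Y(y)$ for Borel $f\ge0$. A map $p:X\to Y$ is a submetry if $p(B_r(x))=B_r(p(x))$ for all $x\in X$, $r>0$ (open balls). A metric foliation is a family of pairwise disjoint closed sets covering $X$ with $d(F,F')=d(x,F')$ for leaves $F,F'$, $x\in F$; its quotient $X^*$ has distance $d^*(y,y')=d(p^{-1}(y),p^{-1}(y'))$ and measure $m^*=p_*m$; it is a metric measure foliation if $m^*$ is locally finite and the disintegration of $m$ for the quotient map satisfies $W_2(\mu_y,\mu_{y'})=d^*(y,y')$ on a Borel set of full $m^*$-measure. mm-isomorphic means there is a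 measure-preserving isometry. *)

From HB Require Import structures.
From mathcomp Require Import all_boot all_order all_algebra.
From mathcomp Require Import all_classical all_reals all_analysis.
From mathcomp Require Import measurable_realfun.
Set Implicit Arguments. Unset Strict Implicit. Unset Printing Implicit Defensive.
Import Order.TTheory GRing.Theory Num.Theory.
Local Open Scope classical_set_scope.
Local Open Scope ring_scope.

Section Defs.
Context {R : realType}.

Definition is_metric {X : Type} (d : X -> X -> R) : Prop :=
  [/\ forall x y, 0 <= d x y,
      forall x y, d x y = 0 <-> x = y,
      forall x y, d x y = d y x &
      forall x y z, d x z <= d x y + d y z].

Definition oball {X : Type} (d : X -> X -> R) (x : X) (r : R) : set X :=
  [set y | d x y < r].

Definition metric_open {X : Type} (d : X -> X -> R) (A : set X) : Prop :=
  forall x, A x -> exists2 r : R, 0 < r & oball d x r `<=` A.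

Definition metric_closed {X : Type} (d : X -> X -> R) (A : set X) : Prop :=
  metric_open d (~` A).

Definition metric_complete {X : Type} (d : X -> X -> R) : Prop :=
  forall u : nat -> X,
    (forall e : R, 0 < e -> exists N : nat, forall m n : nat,
        (N <= m)%N -> (N <= n)%N -> d (u m) (u n) < e) ->
    exists x : X, forall e : R, 0 < e -> exists N : nat, forall n : nat,
        (N <= n)%N -> d (u n) x < e.

Definition metric_separable {X : Type} (d : X -> X -> R) : Prop :=
  exists D : set X, countable D /\
    forall x (e : R), 0 < e -> exists2 z, D z & d x z < e.

Definition mm_space {dsp : measure_display} (X : measurableType dsp)
    (d : X -> X -> R) (m : {measure set X -> \bar R}) : Prop :=
  [/\ is_metric d, metric_complete d, metric_separable d,
      (@measurable _ X) = <<s metric_open d >> &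
      forall x (r : R), 0 < r ->
        (0 < m (oball d x r))%E /\ (m (oball d x r) < +oo)%E].

Definition coupling {dsp : measure_display} {X : measurableType dsp}
    (mu nu : probability X R) (pi : probability (X * X)%type R) : Prop :=
  (forall A, measurable A -> pi (A `*` setT) = mu A) /\
  (forall B, measurable B -> pi (setT `*` B) = nu B).

Definition W2sq {dsp : measure_display} {X : measurableType dsp}
    (d : X -> X -> R) (mu nu : probability X R) : \bar R :=
  ereal_inf [set c | exists pi : probability (X * X)%type R,
                       coupling mu nu pi /\
                       c = (\int[pi]_z ((d z.1 z.2) ^+ 2)%:E)%E].

Definition W2 {dsp : measure_display} {X : measurableType dsp}
    (d : X -> X -> R) (mu nu : probability X R) : \bar R :=
  match W2sq d mu nu with
  | r%:E => (Num.sqrt r)%:E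
  | +oo%E => +oo%E
  | -oo%E => -oo%E
  end.

Definition is_disintegration {dx dy : measure_display}
    {X : measurableType dx} {Y : measurableType dy}
    (mX : {measure set X -> \bar R}) (mY : {measure set Y -> \bar R})
    (p : X -> Y) (mu : Y -> probability X R) : Prop :=
  [/\ forall A, measurable A -> measurable_fun [set: Y] ((fun y => mu y A) : Y -> \bar R),
      {ae mY, forall y, mu y (~` (p @^-1` [set y])) = 0%E} &
      forall f : X -> \bar R, measurable_fun setT f -> (forall x, 0 <= f x)%E ->
        (\int[mX]_x f x = \int[mY]_y (\int[mu y]_x f x))%E].

Definition submetry {X Y : Type} (dX : X -> X -> R) (dY : Y -> Y -> R)
    (p : X -> Y) : Prop :=
  forall x (r : R), 0 < r -> p @` oball dX x r = oball dY (p x) r.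

Definition dist_pt_set {X : Type} (d : X -> X -> R) (x : X) (B : set X) : R :=
  inf [set d x b | b in B].

Definition dist_set {X : Type} (d : X -> X -> R) (A B : set X) : R :=
  inf [set d ab.1 ab.2 | ab in A `*` B].

End Defs.

From HB Require Import structures.
From mathcomp Require Import all_boot all_order all_algebra.
From mathcomp Require Import all_classical all_reals all_analysis.
From mathcomp Require Import measurable_realfun.
From mathcomp Require Import ring lra.
Import Order.TTheory GRing.Theory Num.Theory.
Local Open Scope classical_set_scope.
Local Open Scope ring_scope.

(* Approximate lifts suffice: if for all x, y' with d(p x, y') < r and all
   eps > 0 some x' has d(x, x') < r and d(p x', y') < eps, then a chain of such
   lifts with geometrically decreasing errors converges in the complete space X
   to an exact lift, so the 1-Lipschitz map p is a submetry.

   Approximate lifts come from optimal transport between fibre measures.  Let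
   z, z' be good base points (mu_z, mu_z' carried by their fibres and
   W_2(mu_z, mu_z') = d(z, z') =: D) and mu_z(U) > 0.  The distance is at least
   D on p^-1(z) x p^-1(z'), so a coupling of cost below
   D^2 + ((D + eta)^2 - D^2) mu_z(U) cannot move all of U by D + eta or more:
   some point of U lies within D + eta of the fibre over z'.  Take U a small
   ball around x, z a good point whose fibre measure charges U (it exists by
   disintegration, and then p x is close to z) and z' a good point close to y'.

   Once p is a submetry, distances between fibres, and from a point to a fibre,
   are the distances of the base points, which gives the foliation statements. *)

Section Metric.
Context {R : realType} {T : Type} {d : T -> T -> R} (hd : is_metric d).

Lemma is_metric_ge0 x y : 0 <= d x y. Proof. by case: hd. Qed.
Lemma is_metric_sym x y : d x y = d y x. Proof. by case: hd. Qed.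
Lemma is_metric_triangle x y z : d x z <= d x y + d y z. Proof. by case: hd. Qed.

Lemma is_metric_xx x : d x x = 0.
Proof. by case: hd => _ h _ _; exact: (h x x).2. Qed.

Lemma is_metric_eq0 x y : d x y = 0 -> x = y.
Proof. by case: hd => _ h _ _; exact: (h x y).1. Qed.

Lemma oball_open x r : metric_open d (oball d x r).
Proof.
move=> y; rewrite /oball /= => hy; exists (r - d x y); first by rewrite subr_gt0.
by move=> z; rewrite /oball /= => hz; have := is_metric_triangle x y z; lra.
Qed.

Lemma separable_dense_seq (x0 : T) : metric_separable d ->
  exists q : nat -> T, forall x e, 0 < e -> exists k, d x (q k) < e.
Proof.
move=> [D [cD hD]]; have [f finj] := countable_injP _ cD.
pose q k := if pselect (exists2 z, D z & f z = k) is left h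
  then projT1 (cid2 h) else x0.
exists q => x e e0; have [z Dz hz] := hD x e e0.
exists (f z); rewrite /q; case: pselect => [h|]; last by case; exists z.
by case: (cid2 h) => z' Dz' /= fz'; rewrite (finj z' z) ?inE.
Qed.

End Metric.

Lemma geometric_lt_eventually {R : realType} (a eps : R) : 0 < eps ->
  exists N, forall n, (N <= n)%N -> a / 2 ^+ n < eps.
Proof.
move=> eps0; exists (Num.bound (`|a| / eps)) => n Nn.
have pow_gt_n : (n%:R : R) < 2 ^+ n by rewrite -natrX ltr_nat ltn_expl.
have bound_le_n : ((Num.bound (`|a| / eps))%:R : R) <= n%:R by rewrite ler_nat.
have := archi_boundP (divr_ge0 (normr_ge0 a) (ltW eps0)).
move=> /lt_le_trans/(_ bound_le_n)/lt_trans/(_ pow_gt_n).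
rewrite ltr_pdivrMr // => ha.
have : a / 2 ^+ n <= `|a| / 2 ^+ n.
  by apply: ler_wpM2r; [rewrite invr_ge0 exprn_ge0|exact: ler_norm].
by move=> /le_lt_trans; apply; rewrite ltr_pdivrMr ?exprn_gt0 // mulrC.
Qed.

Section GeometricChain.
Context {R : realType} {T : Type} {d : T -> T -> R} (hd : is_metric d).
Context {u : nat -> T} {a : R}.
Hypothesis du : forall n, d (u n) (u n.+1) <= a / 2 ^+ n.

Let geo_ge0 n : 0 <= a / 2 ^+ n.
Proof. exact: le_trans (is_metric_ge0 hd _ _) (du n). Qed.

Lemma geometric_chain_dist n k :
  d (u n) (u (n + k)%N) <= a / 2 ^+ n * 2 - a / 2 ^+ (n + k) * 2.
Proof.
elim: k => [|k IH]; first by rewrite addn0 is_metric_xx // subrr.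
have halve : a / 2 ^+ (n + k).+1 * 2 = a / 2 ^+ (n + k).
  by rewrite exprS; field; rewrite expf_neq0 ?pnatr_eq0.
have := is_metric_triangle hd (u n) (u (n + k)%N) (u (n + k).+1).
by have := du (n + k)%N; rewrite addnS; lra.
Qed.

Lemma geometric_chain_cvg : metric_complete d ->
  exists l, (forall e, 0 < e -> exists N, forall n, (N <= n)%N -> d (u n) l < e)
            /\ d (u 0%N) l <= a * 2.
Proof.
move=> hc; have [l ul] : exists l, forall e, 0 < e ->
    exists N, forall n, (N <= n)%N -> d (u n) l < e.
  apply: hc => e /(geometric_lt_eventually (a * 4))[N hN]; exists N => m n Nm Nn.
  have dm := geometric_chain_dist N (m - N); rewrite subnKC // in dm.
  have dn := geometric_chain_dist N (n - N); rewrite subnKC // in dn.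
  have := is_metric_triangle hd (u m) (u N) (u n).
  rewrite (is_metric_sym hd (u m) (u N)).
  have := hN N (leqnn N); have := geo_ge0 m; have := geo_ge0 n.
  by rewrite mulrAC; lra.
exists l; split => //; apply/ler_addgt0Pr => e /ul[N /(_ N (leqnn N)) hN].
have := geometric_chain_dist 0 N; have := is_metric_triangle hd (u 0%N) (u N) l.
by rewrite add0n expr0 divr1; have := geo_ge0 N; lra.
Qed.

End GeometricChain.

Section LipschitzMap.
Context {R : realType} {X Y : Type} {dX : X -> X -> R} {dY : Y -> Y -> R}.
Context {p : X -> Y} (hdX : is_metric dX) (hdY : is_metric dY).
Hypothesis lip : forall x x', dY (p x) (p x') <= dX x x'.

Lemma fibre_closed y : metric_closed dX (p @^-1` [set y]).
Proof.
move=> x /= pxy; exists (dY (p x) y).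
  rewrite lt_neqAle is_metric_ge0 // andbT eq_sym.
  by apply: contra_notN pxy => /eqP/(is_metric_eq0 hdY).
move=> z; rewrite /oball /= => + pz; rewrite -pz.
by move=> /(le_lt_trans (lip x z)); rewrite ltxx.
Qed.

Section ApproximateLift.
Hypothesis approx_lift : forall x y' r eps, dY (p x) y' < r -> 0 < eps ->
  exists2 x', dX x x' < r & dY (p x') y' < eps.

Lemma approx_lift_chain y' x0 a : dY (p x0) y' < a ->
  exists u : nat -> X, u 0%N = x0 /\
    forall n, dX (u n) (u n.+1) < a / 2 ^+ n /\ dY (p (u n)) y' < a / 2 ^+ n.
Proof.
move=> x0a; have a0 : 0 < a := le_lt_trans (is_metric_ge0 hdY _ _) x0a.
have next (nz : nat * X) : exists z', dY (p nz.2) y' < a / 2 ^+ nz.1 ->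
    dX nz.2 z' < a / 2 ^+ nz.1 /\ dY (p z') y' < a / 2 ^+ nz.1.+1.
  case: nz => n z /=.
  have [zn|] := pselect (dY (p z) y' < a / 2 ^+ n); last by exists z.
  have [|z' zz' z'y'] := approx_lift z y' _ (a / 2 ^+ n.+1) zn.
    by rewrite divr_gt0 ?exprn_gt0.
  by exists z'.
have [g hg] := choice next.
pose u := fix u n := if n is k.+1 then g (k, u k) else x0.
have near_y' n : dY (p (u n)) y' < a / 2 ^+ n.
  by elim: n => [|n IH]; [rewrite expr0 divr1 | exact: (hg (n, u n) IH).2].
by exists u; split => // n; split; [exact: (hg (n, u n) (near_y' n)).1|].
Qed.

Lemma lift_of_approx_lift : metric_complete dX ->
  forall x y' r, dY (p x) y' < r -> exists2 x', p x' = y' & dX x x' < r.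
Proof.
move=> hc x y' r xr; set s := r - dY (p x) y'.
have s0 : 0 < s by rewrite subr_gt0.
have [x1 xx1 x1y'] :
    exists2 x1, dX x x1 < dY (p x) y' + s / 2 & dY (p x1) y' < s / 4.
  by apply: approx_lift; rewrite ?ltrDl divr_gt0.
have [u [u0 hu]] := approx_lift_chain _ _ _ x1y'.
have [l [ul u0l]] := geometric_chain_cvg hdX (fun n => ltW (hu n).1) hc.
exists l; last first.
  rewrite u0 /s in u0l; rewrite /s in xx1.
  by have := is_metric_triangle hdX x x1 l; lra.
apply: (is_metric_eq0 hdY); apply/eqP; rewrite eq_le is_metric_ge0 // andbT.
apply/ler_addgt0Pr => e e0; rewrite add0r.
have e20 : 0 < e / 2 by rewrite divr_gt0.
have [N1 hN1] := ul _ e20; have /(geometric_lt_eventually (s / 4))[N2 hN2] := e20.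
have := hN1 _ (leq_maxl N1 N2); have := hN2 _ (leq_maxr N1 N2).
have := is_metric_triangle hdY (p l) (p (u (maxn N1 N2))) y'.
have := lip l (u (maxn N1 N2)); rewrite (is_metric_sym hdX l).
by have := (hu (maxn N1 N2)).2; lra.
Qed.

Lemma submetry_of_approx_lift : metric_complete dX -> submetry dX dY p.
Proof.
move=> /lift_of_approx_lift lift x r r0; apply/seteqP; split.
  by move=> _ [x' xx' <-]; exact: le_lt_trans (lip x x') xx'.
by move=> y' /lift[x' <- xx']; exists x'.
Qed.

End ApproximateLift.
End LipschitzMap.

Section BorelMetric.
Context {R : realType} {dsp : measure_display} {T : measurableType dsp}.
Context {d : T -> T -> R} (hd : is_metric d).
Hypothesis borel : (@measurable _ T) = <<s metric_open d >>.

Lemma metric_open_measurable A : metric_open d A -> measurable A.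
Proof. by rewrite borel; apply: sub_sigma_algebra. Qed.

Lemma oball_measurable x r : measurable (oball d x r).
Proof. exact/metric_open_measurable/oball_open. Qed.

Lemma metric_closed_measurable A : metric_closed d A -> measurable A.
Proof. by move=> /metric_open_measurable/measurableC; rewrite setCK. Qed.

Hypothesis separable : metric_separable d.

Lemma measurable_dist_lt t : measurable [set z : T * T | d z.1 z.2 < t].
Proof.
have [->|/set0P[[x0 _] _]] := eqVneq [set z : T * T | d z.1 z.2 < t] set0.
  exact: measurable0.
have [q hq] := separable_dense_seq x0 separable.
pose rho (n : nat) : R := n.+1%:R^-1 / 2.
have -> : [set z : T * T | d z.1 z.2 < t] =
    \bigcup_k \bigcup_n (oball d (q k) (rho n) `*` oball d (q k) (t - rho n)).
  apply/seteqP; split => [[a b] /= ab|[a b] [k _ [n _ []]]]; last first.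
    rewrite /oball /= => qa qb; have := is_metric_triangle hd a (q k) b.
    by rewrite (is_metric_sym hd a (q k)); lra.
  have [n abn] := ltr_add_invr ab.
  have [k ak] : exists k, d a (q k) < rho n by apply: hq; rewrite divr_gt0.
  exists k => //; exists n => //.
  split; rewrite /oball /= (is_metric_sym hd (q k)) //.
  have := is_metric_triangle hd b a (q k); rewrite (is_metric_sym hd b a).
  have : rho n * 2 = n.+1%:R^-1 by rewrite mulfVK.
  by move: ak abn; rewrite /rho; set u := n.+1%:R^-1; lra.
by do 2 apply: bigcupT_measurable => ?; apply: measurableX; apply: oball_measurable.
Qed.

Lemma measurable_dist : measurable_fun setT (fun z : T * T => d z.1 z.2).
Proof.
apply: (@measurability _ _ _ _ _ _ _ (@RGenInftyO.measurableE R)).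
move=> _ [_ [t ->] <-].
rewrite setTI -[X in measurable X]/[set z : T * T | d z.1 z.2 < t].
by apply: measurable_dist_lt.
Qed.

End BorelMetric.

Section ConullSets.
Context {R : realType} {d : measure_display} {T : measurableType d}.
Context {m : {measure set T -> \bar R}}.

Lemma measure_gt0_meet_conull {A B : set T} : measurable A -> measurable B ->
  m (~` A) = 0%E -> (0 < m B)%E -> B `&` A !=set0.
Proof.
move=> mA mB A0 B0; apply/set0P; apply: contraTneq B0 => BA0.
rewrite -leNgt -A0 le_measure ?inE //; first exact: measurableC.
by move=> b Bb Ab; have : (B `&` A) b by []; rewrite BA0.
Qed.

Lemma ae_conull_subset {O : set T} {P : T -> Prop} :
  measurable O -> m (~` O) = 0%E -> {ae m, forall y, P y} ->
  exists G, [/\ measurable G, m (~` G) = 0%E, G `<=` O & forall y, G y -> P y].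
Proof.
move=> mO O0 [N [mN N0 PN]]; exists (O `\` N); split => [||y []//|y [_ Ny]].
- exact: measurableD.
- have : (m (~` O `|` N) <= m (~` O) + m N)%E.
    by apply: measureU2 => //; exact: measurableC.
  by rewrite O0 N0 adde0 measure_le0 setCD => /eqP.
- by apply: contrapT => /PN.
Qed.

End ConullSets.

Lemma disintegration_gt0 {R : realType} {dx dy : measure_display}
    {X : measurableType dx} {Y : measurableType dy}
    {mX : {measure set X -> \bar R}} {mY : {measure set Y -> \bar R}}
    {p : X -> Y} {mu : Y -> probability X R} {G : set Y} {B : set X} :
  is_disintegration mX mY p mu -> measurable G -> mY (~` G) = 0%E ->
  measurable B -> (0 < mX B)%E -> exists2 z, G z & (0 < mu z B)%E.
Proof.
move=> [mmu _ dint] mG G0 mB; apply: contraPP => noz.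
have muB0 z : G z -> mu z B = 0%E.
  move=> Gz; apply/eqP; rewrite eq_le measure_ge0 andbT leNgt.
  by apply/negP => ?; apply: noz; exists z.
have mindic : measurable_fun setT (fun x => (\1_B x : R)%:E).
  by apply/measurable_EFinP; exact: measurable_indic.
have indic_ge0 x : (0 <= (\1_B x : R)%:E)%E by rewrite lee_fin.
have ae0 : ae_eq mY setT (fun y => mu y B) (cst 0%E).
  exists (~` G); split => [|//|y /= /not_implyP[_ + Gy]]; first exact: measurableC.
  by apply; exact: muB0.
have := dint _ mindic indic_ge0; rewrite integral_indic // setIT.
under eq_integral do rewrite integral_indic // setIT.
rewrite (ge0_ae_eq_integral _ _ _ _ _ ae0) ?integral0 //.
- by move=> ->; rewrite ltxx.
- exact: mmu.
Qed.

Lemma measurable_superlevel_set {R : realType} {d : measure_display}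
    {T : measurableType d} (f : T -> R) (c : R) :
  measurable_fun setT f -> measurable [set w | c <= f w].
Proof.
move=> mf; have -> : [set w | c <= f w] = f @^-1` `[c, +oo[%classic.
  by apply/seteqP; split => w; rewrite /= in_itv /= andbT.
by rewrite -[X in measurable X]setTI; apply: mf.
Qed.

Lemma sqr_ge_two_level {R : realType} (D D' x : R) (a s : bool) :
  0 <= D <= D' -> (a -> D <= x) -> (s -> D' <= x) ->
  D ^+ 2 * a%:R + (D' ^+ 2 - D ^+ 2) * s%:R <= x ^+ 2.
Proof.
move=> /andP[D0 DD']; case: a; case: s => /= hA hS;
  rewrite ?mulr1 ?mulr0 ?addr0 ?add0r.
- by have := hA isT; have := hS isT; nra.
- by have := hA isT; nra.
- by have := hS isT; nra.
- exact: sqr_ge0.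
Qed.

Lemma integral_sq_ge_tail {R : realType} {d : measure_display}
    {T : measurableType d} {P : probability T R} {f : T -> R} {A : set T}
    {D D' : R} :
  measurable_fun setT f -> measurable A -> P (~` A) = 0%E -> 0 <= D <= D' ->
  (forall w, A w -> D <= f w) ->
  ((D ^+ 2)%:E + (D' ^+ 2 - D ^+ 2)%:E * P [set w | (D' <= f w)%R] <=
    \int[P]_w ((f w) ^+ 2)%:E)%E.
Proof.
move=> mf mA A0 DD' Af; set S := [set w | D' <= f w].
have mS : measurable S by exact: measurable_superlevel_set.
have PA : (P : {measure set T -> \bar R}) A = 1%E.
  have := probability_setC P (measurableC mA).
  by rewrite setCK A0 sube0 => PA; exact: PA.
have kap0 : 0 <= D' ^+ 2 - D ^+ 2.
  by case/andP: DD' => D0 DD'; rewrite subr_ge0; nra.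
have mind (E : set T) : measurable E -> measurable_fun setT (fun w => (\1_E w)%:E).
  by move=> mE; apply/measurable_EFinP; exact: measurable_indic.
have lhsE : (\int[P]_w ((D ^+ 2)%:E * (\1_A w)%:E +
                       (D' ^+ 2 - D ^+ 2)%:E * (\1_S w)%:E) =
    (D ^+ 2)%:E + (D' ^+ 2 - D ^+ 2)%:E * P S)%E.
  rewrite ge0_integralD //; last 4 first.
  - by move=> w _; rewrite -EFinM lee_fin mulr_ge0 ?sqr_ge0.
  - exact/measurable_funeM/mind.
  - by move=> w _; rewrite -EFinM lee_fin mulr_ge0.
  - exact/measurable_funeM/mind.
  rewrite !ge0_integralZl_EFin ?sqr_ge0 //; try exact: mind.
  by rewrite !integral_indic // !setIT PA mule1.
rewrite -lhsE; apply: ge0_le_integral => //.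
- by move=> w _; rewrite -!EFinM -EFinD lee_fin addr_ge0 // mulr_ge0 ?sqr_ge0.
- by apply: emeasurable_funD; apply/measurable_funeM/mind.
- exact/measurable_EFinP/measurable_funX.
move=> w _; rewrite -!EFinM -EFinD lee_fin !indicE.
by apply: sqr_ge_two_level => // /set_mem; [exact: Af|].
Qed.

Section Couplings.
Context {R : realType} {d : measure_display} {X : measurableType d}.
Implicit Types (mu nu : probability X R) (pi : probability (X * X)%type R).

Lemma coupling_conull_setX {mu nu pi} {A B : set X} : coupling mu nu pi ->
  measurable A -> measurable B -> mu (~` A) = 0%E -> nu (~` B) = 0%E ->
  pi (~` (A `*` B)) = 0%E.
Proof.
move=> [pi1 pi2] mA mB A0 B0.
have -> : ~` (A `*` B) = (~` A `*` setT) `|` (setT `*` ~` B).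
  apply/seteqP; split => [[a b] /not_andP[]|[a b] [[]|[]] //= ? ? []//].
  - by left.
  - by right.
have : (pi ((~` A `*` setT) `|` (setT `*` ~` B)) <=
        pi (~` A `*` setT) + pi (setT `*` ~` B))%E.
  by apply: measureU2; apply: measurableX => //; exact: measurableC.
by rewrite pi1 ?pi2 ?A0 ?B0 ?adde0 ?measure_le0 => [/eqP||]//; exact: measurableC.
Qed.

Lemma W2_near_optimal_coupling {dist : X -> X -> R} {mu nu} {D eps : R} :
  W2 dist mu nu = D%:E -> 0 < eps -> exists pi, coupling mu nu pi /\
    (\int[pi]_z ((dist z.1 z.2) ^+ 2)%:E < (D ^+ 2 + eps)%:E)%E.
Proof.
rewrite /W2; case E: (W2sq dist mu nu) => [r| |] // [<-] eps0.
have : (W2sq dist mu nu < (Num.sqrt r ^+ 2 + eps)%:E)%E.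
  rewrite E lte_fin; have [r0|r0] := leP 0 r; first by rewrite sqr_sqrtr // ltrDl.
  by apply: lt_le_trans r0 _; rewrite addr_ge0 ?sqr_ge0 ?ltW.
by move=> /ereal_inf_lt[_ [pi [cpi ->]] lt]; exists pi.
Qed.

Lemma coupling_near_transport {dist : X -> X -> R} {mu nu pi}
    {F F' U : set X} {D eta : R} :
  measurable_fun setT (fun w : X * X => dist w.1 w.2) -> coupling mu nu pi ->
  measurable F -> measurable F' -> measurable U ->
  mu (~` F) = 0%E -> nu (~` F') = 0%E ->
  (forall a b, F a -> F' b -> D <= dist a b) -> 0 <= D -> 0 < eta ->
  (\int[pi]_w ((dist w.1 w.2) ^+ 2)%:E <
    (D ^+ 2 + ((D + eta) ^+ 2 - D ^+ 2) * fine (mu U))%:E)%E ->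
  exists a b, [/\ U a, F' b & dist a b < D + eta].
Proof.
move=> mdist cpi mF mF' mU F0 F'0 distF D0 eta0 cost.
have mFF' := measurableX mF mF'.
have null := coupling_conull_setX cpi mF mF' F0 F'0.
have DD' : 0 <= D <= D + eta by rewrite D0 lerDl ltW.
have far_mass := integral_sq_ge_tail mdist mFF' null DD'
  (fun w (Fw : (F `*` F') w) => distF _ _ Fw.1 Fw.2).
set S := [set w | (D + eta <= dist w.1 w.2)%R] in far_mass.
have mS : measurable S by exact: measurable_superlevel_set.
have mUX : measurable (U `*` [set: X]) by exact: measurableX.
suff near_pos : (0 < pi ((U `*` setT) `\` S))%E.
  have [[a b] [[[Ua _] nS] [_ F'b]]] :=
    measure_gt0_meet_conull mFF' (measurableD mUX mS) null near_pos.
  by exists a, b; split => //; rewrite ltNge; apply/negP.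
rewrite lt0e measure_ge0 andbT; apply/eqP => near0.
have : (pi (U `*` setT) <= pi ((U `*` setT) `\` S) + pi S)%E.
  apply: le_trans (measureU2 _ _ _) => //; last exact: measurableD.
  apply: le_measure; rewrite ?inE //; first exact: measurableU (measurableD _ _) _.
  by move=> w UXw; have [Sw|nSw] := pselect (S w); [right|left].
rewrite near0 add0e (cpi.1 _ mU) -[mu U]fineK ?fin_num_measure // => mass.
have : ((D ^+ 2 + ((D + eta) ^+ 2 - D ^+ 2) * fine (mu U))%:E <=
        \int[pi]_w (dist w.1 w.2 ^+ 2)%:E)%E.
  apply: le_trans far_mass; rewrite EFinD; apply: leeD2l; rewrite EFinM.
  by apply: lee_wpmul2l => //; rewrite lee_fin subr_ge0; nra.
by rewrite leNgt cost.
Qed.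

End Couplings.

Section DisintegrationLift.
Context {R : realType} {dx dy : measure_display}.
Context {X : measurableType dx} {Y : measurableType dy}.
Context {dX : X -> X -> R} {dY : Y -> Y -> R}.
Context {mX : {measure set X -> \bar R}} {mY : {measure set Y -> \bar R}}.
Context {p : X -> Y} {mu : Y -> probability X R}.
Hypotheses (hX : mm_space dX mX) (hY : mm_space dY mY).
Hypothesis lip : forall x x', dY (p x) (p x') <= dX x x'.
Hypothesis dis : is_disintegration mX mY p mu.
Context {G : set Y}.
Hypotheses (mG : measurable G) (G0 : mY (~` G) = 0%E).
Hypothesis Gfibre : forall y, G y -> mu y (~` (p @^-1` [set y])) = 0%E.
Hypothesis GW2 : forall y y', G y -> G y' -> W2 dX (mu y) (mu y') = (dY y y')%:E.

Let hdX : is_metric dX. Proof. by case: hX. Qed.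
Let hdY : is_metric dY. Proof. by case: hY. Qed.
Let borelX : (@measurable _ X) = <<s metric_open dX >>. Proof. by case: hX. Qed.
Let borelY : (@measurable _ Y) = <<s metric_open dY >>. Proof. by case: hY. Qed.

Let fibre_measurable y : measurable (p @^-1` [set y]).
Proof. exact: metric_closed_measurable borelX _ (fibre_closed hdY lip y). Qed.

Lemma fibre_transport {z z' : Y} {U : set X} {eta : R} :
  G z -> G z' -> measurable U -> (0 < mu z U)%E -> 0 < eta ->
  exists a b, [/\ U a, p b = z' & dX a b < dY z z' + eta].
Proof.
move=> Gz Gz' mU zU eta0; have D0 := is_metric_ge0 hdY z z'.
have m0 : 0 < fine (mu z U) by rewrite fine_gt0 // zU /= ltey_eq fin_num_measure.
have eps0 : 0 < ((dY z z' + eta) ^+ 2 - dY z z' ^+ 2) * fine (mu z U).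
  by apply: mulr_gt0 => //; nra.
have [pi [cpi cost]] := W2_near_optimal_coupling (GW2 _ _ Gz Gz') eps0.
have mdist : measurable_fun setT (fun w : X * X => dX w.1 w.2).
  by apply: measurable_dist hdX borelX _; case: hX.
apply: coupling_near_transport mdist cpi (fibre_measurable z) (fibre_measurable z')
  mU (Gfibre _ Gz) (Gfibre _ Gz') _ D0 eta0 cost.
by move=> a b <- <-; exact: lip.
Qed.

Lemma approx_lift_disintegration x y' r eps : dY (p x) y' < r -> 0 < eps ->
  exists2 x', dX x x' < r & dY (p x') y' < eps.
Proof.
move=> xr eps0; set e := Num.min eps ((r - dY (p x) y') / 4).
have e0 : 0 < e by rewrite lt_min eps0 divr_gt0 // subr_gt0.
have e_eps : e <= eps by rewrite ge_min lexx.
have e_r : e <= (r - dY (p x) y') / 4 by rewrite ge_min lexx orbT.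
have xB : (0 < mX (oball dX x e))%E by case: hX => _ _ _ _ /(_ x e e0)[].
have y'B : (0 < mY (oball dY y' e))%E by case: hY => _ _ _ _ /(_ y' e e0)[].
have mBx := oball_measurable hdX borelX x e.
have [z Gz zB] := disintegration_gt0 dis mG G0 mBx xB.
have [a0 [xa0 pa0]] :=
  measure_gt0_meet_conull (fibre_measurable z) mBx (Gfibre _ Gz) zB.
have [z' [y'z' Gz']] :=
  measure_gt0_meet_conull mG (oball_measurable hdY borelY y' e) G0 y'B.
have [a [b [xa pb ab]]] := fibre_transport Gz Gz' mBx zB e0.
move: xa0 y'z' xa; rewrite /oball /= => xa0 y'z' xa.
exists b; last by rewrite pb (is_metric_sym hdY z' y'); lra.
have := lip a0 x; rewrite pa0 (is_metric_sym hdX a0).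
have := is_metric_triangle hdY z (p x) z'.
have := is_metric_triangle hdY (p x) y' z'.
by have := is_metric_triangle hdX x a b; lra.
Qed.

Lemma submetry_of_disintegration : submetry dX dY p.
Proof.
apply: (submetry_of_approx_lift hdX hdY lip approx_lift_disintegration).
by case: hX.
Qed.

End DisintegrationLift.

Lemma inf_eq_of_approx {R : realType} (E : set R) v : lbound E v ->
  (forall eps, 0 < eps -> exists2 e, E e & e < v + eps) -> inf E = v.
Proof.
move=> lb approx; have [e0 Ee0 _] := approx 1 ltr01.
apply/eqP; rewrite eq_le lb_le_inf ?andbT; [|by exists e0|by []].
apply/ler_addgt0Pr => eps /approx[e Ee ev].
by apply: le_trans (ltW ev); apply: ge_inf => //; exists v.
Qed.

Lemma preimage_fibre_saturation {X Y : Type} (p : X -> Y) (A : set Y) :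
  [set x | exists2 y, A y & p @^-1` [set y] = p @^-1` [set p x]] = p @^-1` A.
Proof.
apply/seteqP; split => [x [y Ay fibre_eq]|x Apx]; last by exists (p x).
have : (p @^-1` [set y]) x by rewrite fibre_eq.
by rewrite /= => ->.
Qed.

Section SubmetryFibres.
Context {R : realType} {X Y : Type} {dX : X -> X -> R} {dY : Y -> Y -> R}.
Context {p : X -> Y} (hdY : is_metric dY).
Hypothesis lip : forall x x', dY (p x) (p x') <= dX x x'.
Hypothesis sub : submetry dX dY p.

Lemma submetry_lift x y' eps : 0 < eps ->
  exists2 x', p x' = y' & dX x x' < dY (p x) y' + eps.
Proof.
move=> eps0; have r0 : 0 < dY (p x) y' + eps by rewrite ltr_wpDl ?is_metric_ge0.
have : oball dY (p x) (dY (p x) y' + eps) y' by rewrite /oball /= ltrDl.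
by rewrite -sub // => -[x' xx' px']; exists x'.
Qed.

Lemma submetry_fibre_nonempty y r : 0 < r ->
  p @^-1` oball dY y r !=set0 -> p @^-1` [set y] !=set0.
Proof.
move=> r0 [x xy].
have : oball dY (p x) r y by rewrite /oball /= (is_metric_sym hdY).
by rewrite -sub // => -[x' _ px']; exists x'.
Qed.

Lemma dist_pt_fibre x y' : dist_pt_set dX x (p @^-1` [set y']) = dY (p x) y'.
Proof.
apply: inf_eq_of_approx => [_ [b /= <- <-]|eps /(submetry_lift x y')[x' px' xx']].
  exact: lip.
by exists (dX x x') => //; exists x'.
Qed.

Lemma dist_fibres y y' : p @^-1` [set y] !=set0 ->
  dist_set dX (p @^-1` [set y]) (p @^-1` [set y']) = dY y y'.
Proof.
move=> [x /= <-]; apply: inf_eq_of_approx => [_ [[a b] [/= <- <-] <-]|eps].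
  exact: lip.
by move=> /(submetry_lift x y')[x' px' xx']; exists (dX x x') => //; exists (x, x').
Qed.

Lemma dist_fibre_lt_preimage y r :
  [set x | dist_set dX (p @^-1` [set p x]) (p @^-1` [set y]) < r] =
  p @^-1` oball dY y r.
Proof.
have fibre_px x : p @^-1` [set p x] !=set0 by exists x.
apply/seteqP; split => x.
all: by rewrite /= dist_fibres // /oball /= (is_metric_sym hdY y).
Qed.

End SubmetryFibres.

Theorem lemma3p8 (R : realType) (dx dy : measure_display)
    (X : measurableType dx) (Y : measurableType dy)
    (dX : X -> X -> R) (dY : Y -> Y -> R)
    (mX : {measure set X -> \bar R}) (mY : {measure set Y -> \bar R})
    (p : X -> Y) (mu : Y -> probability X R) :
  mm_space dX mX -> mm_space dY mY ->
  (forall x x', dY (p x) (p x') <= dX x x') ->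
  (forall A, measurable A -> mY A = mX (p @^-1` A)) ->
  is_disintegration mX mY p mu ->
  (exists Omega : set Y, [/\ measurable Omega, mY (~` Omega) = 0%E &
     forall y y', Omega y -> Omega y' -> W2 dX (mu y) (mu y') = (dY y y')%:E]) ->
  (* p is a submetry *)
  submetry dX dY p /\
  (* in particular: the fibers {p^-1(y)}_y form a metric foliation of X ... *)
  [/\ forall y, p @^-1` [set y] !=set0,
      forall y, metric_closed dX (p @^-1` [set y]),
      forall y y' x, p x = y ->
        dist_set dX (p @^-1` [set y]) (p @^-1` [set y']) =
        dist_pt_set dX x (p @^-1` [set y']),
  (* ... which is a metric measure foliation: m^* locally finite and the
     disintegration satisfies W2(mu_F, mu_F') = d^*(F, F') a.e. ... *)
      (forall y, exists2 r : R, 0 < r &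
         (mX [set x | (dist_set dX (p @^-1` [set p x]) (p @^-1` [set y]) < r)%R]
           < +oo)%E) &
      (exists Omega : set Y, [/\ measurable Omega, mY (~` Omega) = 0%E &
         forall y y', Omega y -> Omega y' ->
           W2 dX (mu y) (mu y') =
           (dist_set dX (p @^-1` [set y]) (p @^-1` [set y']))%:E])] /\
  (* ... and Y is mm-isomorphic to X^* via y |-> p^-1(y): the map is an
     isometry (d^*(p^-1 y, p^-1 y') = dY y y') and measure preserving *)
  (forall y y', dist_set dX (p @^-1` [set y]) (p @^-1` [set y']) = dY y y') /\
  (forall A, measurable A ->
     mX [set x | exists2 y, A y & p @^-1` [set y] = p @^-1` [set p x]] = mY A).
Proof.
move=> hX hY lip push dis [Om [mOm Om0 OmW]].
have hdY : is_metric dY by case: hY.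
have borelY : (@measurable _ Y) = <<s metric_open dY >> by case: hY.
have [_ fibre_ae _] := dis.
have [G [mG G0 GOm Gfibre]] := ae_conull_subset mOm Om0 fibre_ae.
have sub : submetry dX dY p.
  apply: (submetry_of_disintegration hX hY lip dis mG G0 Gfibre).
  by move=> y y' /GOm Oy /GOm Oy'; exact: OmW.
have ball_mass y r : 0 < r ->
    (0 < mX (p @^-1` oball dY y r))%E /\ (mX (p @^-1` oball dY y r) < +oo)%E.
  by rewrite -push; [case: hY => _ _ _ _; apply | exact: oball_measurable].
have fibre_ne y : p @^-1` [set y] !=set0.
  apply: (submetry_fibre_nonempty hdY sub y 1 ltr01).
  apply/set0P/negP => /eqP empty.
  by have [] := ball_mass y 1 ltr01; rewrite empty measure0 ltxx.
have distE y y' := dist_fibres hdY lip sub y y' (fibre_ne y).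
split; [exact: sub | split; [split | split]].
- exact: fibre_ne.
- exact: fibre_closed hdY lip.
- by move=> y y' x <-; rewrite distE (dist_pt_fibre hdY lip sub).
- move=> y; exists 1 => //; rewrite (dist_fibre_lt_preimage hdY lip sub).
  by case: (ball_mass y 1 ltr01).
- by exists Om; split => // y y' Oy Oy'; rewrite distE OmW.
- exact: distE.
- by move=> A mA; rewrite preimage_fibre_saturation push.
Qed.
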